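(* Let $X$ be a finite set, $f:2^X\to\mathbb{R}_{\ge 0}$ a normalized monotone submodular function, $n\ge1$ an integer with $n\le|X|$, and $S^*\in\arg\max_{S\subseteq X,\,|S|\le n} f(S)$. Let $x_1,\dots,x_n\in X$ be distinct, set $S_0=\emptyset$, $S_i=\{x_1,\dots,x_i\}$, $S=S_n$, and let $\alpha_1,\dots,\alpha_n$ be positive reals such that for every $i\in\{1,\dots,n\}$, \[ \alpha_i\, f(x_i\mid S_{i-1}) \ \ge\ \max_{x\in X\setminus S_{i-1}} f(x\mid S_{i-1}). \] Then \[ f(S)\ \ge\ \left(1-e^{-\frac{1}{n}\sum_{i=1}^n \frac{1}{\alpha_i}}\right) f(S^* ). \]
   Context: For $A\subseteq X$ and $x\in X$, $f(x\mid A):=f(A\cup\{x\})-f(A)$, and $f(x):=f(\{x\})$. Submodular: $f(x\mid A)\ge f(x\mid B)$ for all $A\subseteq B\subseteq X$, $x\in X\setminus B$; monotone: $f(A)\le f(B)$ for $A\subseteq B$; normalized: $f(\emptyset)=0$. *)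

From HB Require Import structures.
From mathcomp Require Import all_boot all_order all_algebra.
From mathcomp Require Import reals sequences exp.
Set Implicit Arguments. Unset Strict Implicit. Unset Printing Implicit Defensive.
Import Order.TTheory GRing.Theory Num.Theory.
Local Open Scope ring_scope.

Definition marg (R : realType) (X : finType) (f : {set X} -> R)
  (x : X) (A : {set X}) : R := f (x |: A) - f A.

Definition normalized (R : realType) (X : finType) (f : {set X} -> R) :=
  f set0 = 0.

Definition monotone (R : realType) (X : finType) (f : {set X} -> R) :=
  forall A B : {set X}, A \subset B -> f A <= f B.

Definition submodular (R : realType) (X : finType) (f : {set X} -> R) :=
  forall (A B : {set X}) (x : X), A \subset B -> x \notin B ->
    marg f x B <= marg f x A.

(* S_i = {x_1, ..., x_i}; with 0-based indices j : 'I_n, x_{j+1} = x j,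
   so gprefix x i = [set x j | j < i]. *)
Definition gprefix (X : finType) (n : nat) (x : 'I_n -> X) (i : nat) : {set X} :=
  [set x j | j : 'I_n & (j < i)%N].

From HB Require Import structures.
From mathcomp Require Import all_boot all_order all_algebra.
From mathcomp Require Import reals sequences exp.
From mathcomp Require Import ring lra.
Import Order.TTheory GRing.Theory Num.Theory.
Local Open Scope ring_scope.

(* Write S_k for the greedy prefix {x_0, ..., x_(k-1)} and
   d_k := f(S^* ) - f(S_k) for the remaining gap to the optimum.
   1. Submodularity gives the union bound
        f(B ∪ A) <= f(A) + sum_(y in B) f(y | A).
   2. Applied with A := S_k and B := S^*, and combined with the
      alpha-approximate greedy choice, it yields
        d_k <= n alpha_k (f(S_(k+1)) - f(S_k)) = n alpha_k (d_k - d_(k+1)).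
   3. A purely real lemma turns the recurrence c_k d_k <= d_k - d_(k+1)
      (with d nonincreasing) into d_k <= exp(-sum_(j<k) c_j) d_0,
      using 1 - c <= exp(-c).
   With c_k := 1 / (n alpha_k) and d_0 = f(S^* ) the theorem follows.
   The argument only uses #|S^*| <= n and f(S^* ) >= 0, not the optimality
   of S^*, the injectivity of x, or n <= #|X|. *)

Section MarginalGains.
Context {R : realType} {X : finType} {f : {set X} -> R}.
Hypotheses (f_mono : monotone f) (f_sub : submodular f).

Lemma marg_ge0 (y : X) (A : {set X}) : 0 <= marg f y A.
Proof. by rewrite /marg subr_ge0; apply: f_mono; apply: subsetUr. Qed.

Lemma marg_in (y : X) (A : {set X}) : y \in A -> marg f y A = 0.
Proof. by move=> yA; rewrite /marg (setUidPr _) ?subrr // sub1set. Qed.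

Lemma marg_antitone (A B : {set X}) (y : X) :
  A \subset B -> marg f y B <= marg f y A.
Proof.
move=> AB; have [yB | yNB] := boolP (y \in B); last exact: f_sub.
by rewrite marg_in // marg_ge0.
Qed.

Lemma union_bound (A B : {set X}) :
  f (B :|: A) <= f A + \sum_(y in B) marg f y A.
Proof.
move: {2}#|B| (erefl #|B|) => k; elim: k B => [|k IH] B cardB.
  by move/eqP: cardB; rewrite cards_eq0 => /eqP ->; rewrite set0U big_set0 addr0.
have [y yB] : exists y, y \in B by apply/card_gt0P; rewrite cardB.
have cardBy : #|B :\ y| = k by move: cardB; rewrite (cardsD1 y) yB => -[].
have -> : B :|: A = y |: ((B :\ y) :|: A) by rewrite setUA setD1K.
rewrite (big_setD1 y yB) /= -(subrK (f ((B :\ y) :|: A)) (f (y |: _))).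
rewrite addrCA -/(marg f y _); apply: lerD; last exact: IH.
by apply: marg_antitone; apply: subsetUr.
Qed.

Lemma gap_le_card_bound (A T : {set X}) (g : R) :
  0 <= g -> (forall y, y \notin A -> marg f y A <= g) ->
  f T - f A <= #|T|%:R * g.
Proof.
move=> g_ge0 gain_le; rewrite lerBlDl.
have fT : f T <= f (T :|: A) by apply: f_mono; apply: subsetUl.
apply: (le_trans fT); apply: (le_trans (union_bound A T)).
rewrite lerD2l -sum1_card natr_sum mulr_suml; apply: ler_sum => y _.
rewrite mul1r; have [yA | yNA] := boolP (y \in A); last exact: gain_le.
by rewrite marg_in.
Qed.

End MarginalGains.

Lemma gap_decay {R : realType} (d c : nat -> R) (N : nat) :
  0 <= d 0%N ->
  (forall k, (k < N)%N -> d k.+1 <= d k) ->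
  (forall k, (k < N)%N -> c k * d k <= d k - d k.+1) ->
  forall k, (k <= N)%N -> d k <= expR (- \sum_(j < k) c j) * d 0%N.
Proof.
move=> d0_ge0 d_noninc d_step; elim=> [|k IH] kN.
  by rewrite big_ord0 oppr0 expR0 mul1r.
have {}IH := IH (ltnW kN).
have rhs_ge0 : 0 <= expR (- \sum_(j < k.+1) c j) * d 0%N.
  by rewrite mulr_ge0 ?expR_ge0.
have [dk_le0 | dk_gt0] := lerP (d k) 0.
  exact: le_trans (d_noninc k kN) (le_trans dk_le0 rhs_ge0).
have one_step : d k.+1 <= (1 - c k) * d k.
  by rewrite mulrBl mul1r lerBrDr -lerBrDl d_step.
have exp_bound : (1 - c k) * d k <= expR (- c k) * d k.
  by rewrite ler_pM2r // expR_ge1Dx.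
rewrite big_ord_recr /= opprD expRD (mulrC (expR _)) -mulrA.
apply: (le_trans one_step); apply: (le_trans exp_bound).
by rewrite ler_pM2l ?expR_gt0.
Qed.

Lemma gprefix0 {X : finType} {n : nat} (x : 'I_n -> X) : gprefix x 0 = set0.
Proof. by apply/setP => z; rewrite inE; apply/imsetP => -[j]; rewrite inE. Qed.

Lemma gprefixS {X : finType} {n : nat} (x : 'I_n -> X) (i : 'I_n) :
  gprefix x i.+1 = x i |: gprefix x i.
Proof.
apply/setP => z; rewrite /gprefix !inE; apply/imsetP/orP.
  case=> j; rewrite inE ltnS leq_eqVlt => /orP [/eqP/val_inj -> -> | ji ->].
    by left.
  by right; apply/imsetP; exists j; rewrite ?inE.
case=> [/eqP -> | /imsetP [j]]; first by exists i; rewrite ?inE.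
by rewrite inE => ji ->; exists j; rewrite // inE ltnS ltnW.
Qed.

Lemma gprefix_subS {X : finType} {n : nat} (x : 'I_n -> X) (k : nat) :
  gprefix x k \subset gprefix x k.+1.
Proof.
apply/subsetP => z /imsetP [j]; rewrite inE => jk ->.
by apply/imsetP; exists j; rewrite // inE ltnW.
Qed.

Lemma greedy_gap {R : realType} {X : finType} {f : {set X} -> R} {n : nat}
    (f_mono : monotone f) (f_sub : submodular f)
    {x : 'I_n -> X} {i : 'I_n} {a : R} (T : {set X}) (T_card : (#|T| <= n)%N) :
  0 < a ->
  (forall y, y \notin gprefix x i ->
     marg f y (gprefix x i) <= a * marg f (x i) (gprefix x i)) ->
  f T - f (gprefix x i) <= n%:R * a * marg f (x i) (gprefix x i).
Proof.
move=> a_gt0 greedy_i.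
have g_ge0 : 0 <= a * marg f (x i) (gprefix x i).
  by rewrite mulr_ge0 ?marg_ge0 // ltW.
apply: le_trans (gap_le_card_bound f_mono f_sub _ T _ g_ge0 greedy_i) _.
by rewrite -mulrA ler_wpM2r ?ler_nat.
Qed.

Theorem theorem1 (R : realType) (X : finType) (f : {set X} -> R)
  (f_ge0 : forall A : {set X}, 0 <= f A)
  (f_norm : normalized f) (f_mono : monotone f) (f_sub : submodular f)
  (n : nat) (n_ge1 : (1 <= n)%N) (n_le : (n <= #|X|)%N)
  (Sstar : {set X}) (Sstar_card : (#|Sstar| <= n)%N)
  (Sstar_opt : forall S : {set X}, (#|S| <= n)%N -> f S <= f Sstar)
  (x : 'I_n -> X) (x_inj : injective x)
  (alpha : 'I_n -> R) (alpha_pos : forall i, 0 < alpha i)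
  (greedy : forall (i : 'I_n) (y : X), y \notin gprefix x i ->
     marg f y (gprefix x i) <= alpha i * marg f (x i) (gprefix x i)) :
  (1 - expR (- (n%:R^-1 * \sum_(i < n) (alpha i)^-1))) * f Sstar
    <= f (gprefix x n).
Proof.
pose d k := f Sstar - f (gprefix x k).
pose c k := if insub k is Some i then (n%:R * alpha i)^-1 else 0.
have d_noninc k : (k < n)%N -> d k.+1 <= d k.
  by move=> _; rewrite lerD2l lerN2 f_mono ?gprefix_subS.
have d_step k : (k < n)%N -> c k * d k <= d k - d k.+1.
  move=> kn; rewrite /c; pose i := Ordinal kn.
  have scale_pos : 0 < n%:R * alpha i by rewrite mulr_gt0 ?ltr0n.
  have gain : d k - d k.+1 = marg f (x i) (gprefix x i).
    by rewrite /d /marg -(gprefixS x i); ring.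
  have gap : d k <= n%:R * alpha i * marg f (x i) (gprefix x i)
    := greedy_gap f_mono f_sub Sstar Sstar_card (alpha_pos i) (greedy i).
  have -> : insub k = Some i by rewrite -[k]/(val i) valK.
  rewrite gain -(ler_pM2l scale_pos) mulrA mulfV ?gt_eqF //.
  by rewrite mul1r.
have d0 : d 0%N = f Sstar by rewrite /d gprefix0 f_norm subr0.
have d0_ge0 : 0 <= d 0%N by rewrite d0.
have := gap_decay d c n d0_ge0 d_noninc d_step n (leqnn n).
have -> : \sum_(j < n) c j = n%:R^-1 * \sum_(i < n) (alpha i)^-1.
  by rewrite mulr_sumr; apply: eq_bigr => i _; rewrite /c valK invfM.
rewrite d0 mulrBl mul1r /d; lra.
Qed.
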